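(* Let $\Omega\subset\mathbb{R}^n$ be Lebesgue measurable with finite measure, let $f$ satisfy Assumption A, let $L>L_f$, and let $g=\delta_{\mathbb{Z}}$. Let $u_0\in L^2(\Omega)$ and let $(u_k)$ be a sequence such that for every $k\ge0$, $u_{k+1}$ is a global minimizer over $u\in L^2(\Omega)$ of \[ f(u_k)+\int_\Omega\nabla f(u_k)(u-u_k)\,dx+\frac L2\|u-u_k\|_{L^2(\Omega)}^2+\int_\Omega\delta_{\mathbb{Z}}(u(x))\,dx . \] If $u^*\in L^2(\Omega)$ is a weak sequential limit point of $(u_k)$, then the whole sequence satisfies $u_k\to u^*$ in $L^1(\Omega)$.
   Context: Assumption A: $f:L^2(\Omega)\to\mathbb{R}$ is bounded from below, weakly lower semicontinuous, Fréchet differentiable, and $\nabla f:L^2(\Omega)\to L^2(\Omega)$ is Lipschitz continuous with constant $L_f$. $\delta_{\mathbb{Z}}(u)=0$ if $u\in\mathbb{Z}$ and $\delta_{\mathbb{Z}}(u)=+\infty$ otherwise. *)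

From HB Require Import structures.
From mathcomp Require Import all_boot all_order all_algebra.
From mathcomp Require Import all_classical all_reals all_analysis.
Set Implicit Arguments. Unset Strict Implicit. Unset Printing Implicit Defensive.
Import Order.TTheory GRing.Theory Num.Theory.
Import numFieldNormedType.Exports.
Local Open Scope classical_set_scope.
Local Open Scope ring_scope.

Section L2defs.
Context d (T : measurableType d) (R : realType).
Variable mu : {measure set T -> \bar R}.

Definition inL2 (u : T -> R) : Prop := u \in Lfun mu 2%:E.

Definition L2norm (u : T -> R) : R := fine ('N[mu]_2%:E [EFin \o u])%E.

Definition L2inner (u v : T -> R) : R := \int[mu]_x (u x * v x).

(* weak convergence in L^2 (dual of L^2 identified with L^2 by Riesz) *)
Definition weak_cvg_L2 (v : nat -> T -> R) (u : T -> R) : Prop :=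
  forall w, inL2 w -> L2inner (v n) w @[n --> \oo] --> L2inner u w.

Definition bounded_below_L2 (f : (T -> R) -> R) : Prop :=
  exists m : R, forall u, inL2 u -> m <= f u.

(* f is lower semicontinuous for the weak topology of L^2: at every u,
   for every eps > 0 there is a basic weak neighbourhood
   { v | |<v - u, w_i>| < delta, i < m } on which f > f u - eps *)
Definition weakly_lsc_L2 (f : (T -> R) -> R) : Prop :=
  forall u, inL2 u -> forall eps : R, 0 < eps ->
    exists (m : nat) (w : nat -> T -> R) (delta : R),
      [/\ 0 < delta, (forall i, (i < m)%N -> inL2 (w i)) &
        forall v, inL2 v ->
          (forall i, (i < m)%N -> `|L2inner (v \- u) (w i)| < delta) ->
          f u - eps < f v].

(* f is Frechet differentiable on L^2 with gradient (Riesz representative)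
   gradf : L^2 -> L^2, i.e. Df(u) h = int_Omega gradf(u) h dx *)
Definition frechet_gradient_L2 (f : (T -> R) -> R) (gradf : (T -> R) -> T -> R)
  : Prop :=
  forall u, inL2 u ->
    inL2 (gradf u) /\
    forall eps : R, 0 < eps -> exists delta : R, 0 < delta /\
      forall h, inL2 h -> L2norm h < delta ->
        `|f (u \+ h) - f u - L2inner (gradf u) h| <= eps * L2norm h.

Definition lipschitz_L2 (G : (T -> R) -> T -> R) (Lf : R) : Prop :=
  forall u v, inL2 u -> inL2 v -> L2norm (G u \- G v) <= Lf * L2norm (u \- v).

Definition assumptionA (f : (T -> R) -> R) (gradf : (T -> R) -> T -> R) (Lf : R)
  : Prop :=
  [/\ bounded_below_L2 f, weakly_lsc_L2 f, frechet_gradient_L2 f gradf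
    & lipschitz_L2 gradf Lf].

End L2defs.

Definition deltaZ (R : realType) (x : R) : \bar R :=
  if x \is a Num.int then 0%E else +oo%E.

Section objective.
Context d (T : measurableType d) (R : realType).
Variable mu : {measure set T -> \bar R}.

Definition prox_model (f : (T -> R) -> R) (gradf : (T -> R) -> T -> R) (L : R)
  (uk u : T -> R) : \bar R :=
  ((f uk + L2inner mu (gradf uk) (u \- uk) + L / 2 * L2norm mu (u \- uk) ^+ 2)%:E
   + \int[mu]_x deltaZ (u x))%E.

End objective.

From HB Require Import structures.
From mathcomp Require Import all_boot all_order all_algebra.
From mathcomp Require Import all_classical all_reals all_analysis.
From mathcomp Require Import measurable_realfun ring lra.
Set Implicit Arguments. Unset Strict Implicit. Unset Printing Implicit Defensive.
Import Order.TTheory GRing.Theory Num.Theory.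
Import numFieldNormedType.Exports.
Local Open Scope classical_set_scope.
Local Open Scope ring_scope.

(* The constraint g = delta_Z forces every iterate u_(k+1) to be integer-valued
   almost everywhere, so the steps u_(k+2) - u_(k+1) are integer-valued and
   their L^1 norm is bounded by their squared L^2 norm (|z| <= z^2 on Z).
   Testing the minimality of u_(k+2) against u_(k+1) and applying the descent
   lemma for f gives the sufficient decrease
   f(u_(k+2)) <= f(u_(k+1)) - (L - Lf)/2 ||u_(k+2) - u_(k+1)||^2,
   so the squared steps are summable because f is bounded below. Hence (u_k)
   is Cauchy in L^1 with an explicit tail bound, and this bound passes to the
   weak limit u^* of a subsequence by testing against the sign of u_k - u^*,
   which lies in L^2 because the measure is finite. *)

Section L2_space.
Context {d} {T : measurableType d} {R : realType} {mu : {measure set T -> \bar R}}.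

Lemma inL2_measurable u : inL2 mu u -> measurable_fun setT u.
Proof. by rewrite /inL2 inE => /andP[]; rewrite inE. Qed.

Lemma inL2_finite u : inL2 mu u -> ('N[mu]_2%:E[EFin \o u] < +oo)%E.
Proof. by rewrite /inL2 inE => /andP[_]; rewrite inE. Qed.

Lemma inL2_cst0 : inL2 mu (cst 0).
Proof. exact: (Lfun_addr_closed mu (lee1n 2)).1. Qed.

Lemma inL2D u v : inL2 mu u -> inL2 mu v -> inL2 mu (u \+ v).
Proof. exact: (Lfun_addr_closed mu (lee1n 2)).2. Qed.

Lemma inL2B u v : inL2 mu u -> inL2 mu v -> inL2 mu (u \- v).
Proof. by move=> hu hv; apply: inL2D => //; exact: Lfun_oppr_closed. Qed.

Lemma inL2Z a u : inL2 mu u -> inL2 mu (fun x => a * u x).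
Proof.
move=> hu; have := Lfun_scale a (ler1n R 2) hu.
by have -> : a \o* u = (fun x => a * u x) by apply/funext => x /=; rewrite mulrC.
Qed.

Lemma RintegralE (g : T -> R) : mu.-integrable setT (EFin \o g) ->
  (\int[mu]_x g x)%:E = (\int[mu]_x (g x)%:E)%E.
Proof. by move=> hg; rewrite fineK // integrable_fin_num. Qed.

Lemma L2norm_ge0 u : 0 <= L2norm mu u.
Proof. by rewrite /L2norm fine_ge0 // Lnorm_ge0. Qed.

Lemma L2norm_cst0 : L2norm mu (cst 0) = 0.
Proof. by rewrite /L2norm (_ : EFin \o cst 0 = cst 0%E) // Lnorm0. Qed.

Lemma L2normE u : inL2 mu u -> (L2norm mu u)%:E = 'N[mu]_2%:E[EFin \o u]%E.
Proof.
move=> hu; rewrite /L2norm fineK // ge0_fin_numE ?Lnorm_ge0 //.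
exact: inL2_finite.
Qed.

Lemma L2norm_sqrE u : inL2 mu u ->
  (L2norm mu u ^+ 2)%:E = (\int[mu]_x (u x ^+ 2)%:E)%E.
Proof.
move=> hu; have := powR_Lnorm mu (EFin \o u) (lt0r_neq0 (ltr0n R 2)).
rewrite -L2normE // poweR_EFin powR_mulrn ?L2norm_ge0 // => ->.
apply: eq_integral => x _ /=.
by rewrite powR_mulrn // real_normK // num_real.
Qed.

Lemma L2normZ s h : inL2 mu h ->
  L2norm mu (fun x => s * h x) = `|s| * L2norm mu h.
Proof.
move=> hh; apply/eqP.
rewrite -(@eqrXn2 _ 2%N) ?mulr_ge0 ?L2norm_ge0 //.
apply/eqP/EFin_inj.
rewrite (L2norm_sqrE (inL2Z s hh)) exprMn real_normK ?num_real //.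
rewrite EFinM L2norm_sqrE //.
under eq_integral do rewrite exprMn EFinM.
by rewrite integralZl //; exact: Lfun2_integrable_sqr.
Qed.

Lemma L2inner_integrable u v : inL2 mu u -> inL2 mu v ->
  mu.-integrable setT (EFin \o (fun x => u x * v x)).
Proof. by move=> hu hv; apply/Lfun1_integrable; exact: Lfun2_mul_Lfun1. Qed.

Lemma L2inner0r u : L2inner mu u (cst 0) = 0.
Proof.
rewrite /L2inner; under eq_Rintegral do rewrite mulr0.
by rewrite /Rintegral integral0.
Qed.

Lemma L2innerBl a b h : inL2 mu a -> inL2 mu b -> inL2 mu h ->
  L2inner mu (a \- b) h = L2inner mu a h - L2inner mu b h.
Proof.
move=> ha hb hh; rewrite /L2inner.
under eq_Rintegral do rewrite /= mulrBl.
by rewrite RintegralB //; apply: L2inner_integrable.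
Qed.

Lemma L2innerZr u s h : inL2 mu u -> inL2 mu h ->
  L2inner mu u (fun x => s * h x) = s * L2inner mu u h.
Proof.
move=> hu hh; rewrite /L2inner.
under eq_Rintegral do rewrite mulrCA.
by rewrite RintegralZl //; apply: L2inner_integrable.
Qed.

Lemma normr_L2inner_le_integral a b : inL2 mu a -> inL2 mu b ->
  ((`|L2inner mu a b|)%:E <= \int[mu]_x (`|a x * b x|)%:E)%E.
Proof.
move=> ha hb; rewrite -RintegralE; last first.
  by apply: integrable_norm => //; exact: L2inner_integrable.
by rewrite lee_fin; apply: le_normr_Rintegral => //; exact: L2inner_integrable.
Qed.

Lemma L2inner_CauchySchwarz a b : inL2 mu a -> inL2 mu b ->
  `|L2inner mu a b| <= L2norm mu a * L2norm mu b.
Proof.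
move=> ha hb; rewrite -lee_fin; apply: le_trans (normr_L2inner_le_integral ha hb) _.
have h22 : (2^-1 + 2^-1 : R) = 1 by rewrite [RHS]splitr !div1r.
have := hoelder mu (inL2_measurable ha) (inL2_measurable hb) (ltr0n R 2) (ltr0n R 2) h22.
by rewrite Lnorm1 EFinM !L2normE.
Qed.

End L2_space.

Section real_derivative.
Context {R : realType}.

Lemma is_derive_from_quotient (g : R -> R) t D :
  (forall e, 0 < e -> exists del, 0 < del /\ forall s, s != 0 -> `|s| < del ->
     `|(g (s + t) - g t) / s - D| <= e) ->
  is_derive t 1 g D.
Proof.
move=> H.
have cv : (fun s : R => s^-1 *: ((g \o shift t) (s *: 1) - g t)) @ 0^' --> D.
  apply/cvgrPdist_le => e e0.
  have [del [del0 Hd]] := H e e0.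
  rewrite near_withinE; apply/nbhs_ballP; exists del => // s.
  rewrite /ball /= sub0r normrN => hs sneq0.
  rewrite distrC /= -[s%:A]/(s * 1) mulr1 -[s^-1 *: _]/(s^-1 * _) mulrC; exact: Hd.
have dv : derivable g t 1 by apply/cvg_ex; exists D.
by constructor => //; exact: cvg_lim cv.
Qed.

Lemma le_quadratic_of_derive (F dF : R -> R) (K : R) :
  (forall t : R, is_derive t 1 F (dF t)) ->
  (forall t, 0 < t -> dF t <= dF 0 + K * t) ->
  F 1 <= F 0 + dF 0 + K / 2.
Proof.
move=> dFt dFle.
pose G := F - dF 0 *: id - K / 2 *: id ^+ 2.
have dG (t : R) : is_derive t 1 G (dF t - dF 0 - K * t).
  apply: is_derive_eq.
  change (dF t - dF 0 * 1 - K / 2 * (2 * t ^+ 1 * 1) = dF t - dF 0 - K * t).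
  by rewrite !mulr1 expr1; field.
have cG : {within `[0, 1], continuous G}.
  by apply: derivable_within_continuous => x _; exact: ex_derive.
have [c /[!in_itv] /andP[c0 _]] := MVT ltr01 (fun x _ => dG x) cG.
have G10 : G 1 - G 0 = F 1 - F 0 - dF 0 - K / 2.
  change (F 1 - dF 0 * 1 - K / 2 * 1 ^+ 2 - (F 0 - dF 0 * 0 - K / 2 * 0 ^+ 2) = F 1 - F 0 - dF 0 - K / 2).
  by rewrite expr1n expr0n /= !mulr0 !mulr1 !subr0; ring.
rewrite G10 subr0 mulr1; have := dFle _ c0; lra.
Qed.

End real_derivative.

Section descent.
Context {d} {T : measurableType d} {R : realType} {mu : {measure set T -> \bar R}}.
Variables (f : (T -> R) -> R) (gradf : (T -> R) -> T -> R) (Lf : R).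
Hypothesis hF : frechet_gradient_L2 mu f gradf.
Hypothesis hL : lipschitz_L2 mu gradf Lf.
Variables (u h : T -> R).
Hypotheses (hu : inL2 mu u) (hh : inL2 mu h).

Let line (t : R) := fun x => u x + t * h x.

Let inL2_line t : inL2 mu (line t).
Proof. exact: inL2D hu (inL2Z t hh). Qed.

Lemma frechet_is_derive_line (t : R) :
  is_derive t 1 (fun s => f (line s)) (L2inner mu (gradf (line t)) h).
Proof.
apply: is_derive_from_quotient => e e0.
have [hg Hf] := hF (inL2_line t).
set N := L2norm mu h; set q := L2inner _ _ _.
have N1 : 0 < N + 1 by rewrite ltr_wpDl ?L2norm_ge0.
have [del [del0 Hdel]] := Hf (e / (N + 1)) (divr_gt0 e0 N1).
exists (del / (N + 1)); split=> [|s s0]; first exact: divr_gt0.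
rewrite ltr_pdivlMr // => hs.
have lineS : line (s + t) = line t \+ (fun x => s * h x).
  by apply/funext => x; rewrite /line /=; ring.
have := Hdel _ (inL2Z s hh).
rewrite (L2normZ s hh) (L2innerZr s hg hh) -/N -/q => Hs.
have {Hs} := Hs (le_lt_trans (ler_wpM2l (normr_ge0 s) (ler_wpDr ler01 (lexx N))) hs).
have -> : (f (line (s + t)) - f (line t)) / s - q
        = (f (line (s + t)) - f (line t) - s * q) / s by field.
rewrite lineS normrM normfV ler_pdivrMr ?normr_gt0 // => Hs.
have eN : e / (N + 1) * N <= e.
  by rewrite mulrAC ler_pdivrMr // ler_pM2l // lerDl.
by apply: le_trans Hs _; rewrite mulrCA mulrC ler_wpM2r.
Qed.

Lemma descent_lemma :
  f (u \+ h) <= f u + L2inner mu (gradf u) h + Lf / 2 * L2norm mu h ^+ 2.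
Proof.
have line0 : line 0 = u by apply/funext => x; rewrite /line mul0r addr0.
have line1 : line 1 = u \+ h by apply/funext => x; rewrite /line mul1r.
rewrite -line1 -line0 mulrAC.
apply: (le_quadratic_of_derive frechet_is_derive_line) => t t0.
have [hgt _] := hF (inL2_line t); have [hg0 _] := hF (inL2_line 0).
rewrite -lerBlDl -L2innerBl //.
have : line t \- line 0 = (fun x => t * h x).
  by apply/funext => x; rewrite /line /=; ring.
move/(congr1 (L2norm mu)); rewrite L2normZ // ger0_norm ?(ltW t0) // => dline.
have := hL (inL2_line t) (inL2_line 0); rewrite dline => lip.
have := L2inner_CauchySchwarz (inL2B hgt hg0) hh.
have := ler_norm (L2inner mu (gradf (line t) \- gradf (line 0)) h).
have := L2norm_ge0 (mu := mu) h; have := L2norm_ge0 (mu := mu) (gradf (line t) \- gradf (line 0)).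
nra.
Qed.

End descent.

Section integer_valued.
Context {d} {T : measurableType d} {R : realType} {mu : {measure set T -> \bar R}}.

Lemma measurable_int : measurable [set x : R | x \is a Num.int].
Proof.
have -> : [set x : R | x \is a Num.int] = \bigcup_(z : int) [set (z%:~R : R)].
  apply/seteqP; split => x /=; first by move=> /intrP[z ->]; exists z.
  by move=> [z _ ->]; rewrite intr_int.
by apply: countable_bigcupT_measurable => // z; exact: measurable_set1.
Qed.

Lemma deltaZ_int (x : R) : x \is a Num.int -> deltaZ x = 0%E.
Proof. by rewrite /deltaZ => ->. Qed.

Lemma deltaZ_ge0 (x : R) : (0 <= deltaZ x)%E.
Proof. by rewrite /deltaZ; case: ifP. Qed.

Lemma measurable_deltaZ (u : T -> R) : measurable_fun setT u ->
  measurable_fun setT ((fun x => deltaZ (u x)) : T -> \bar R).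
Proof.
move=> mf; apply: measurable_fun_ifT => //.
apply: (measurable_fun_bool true); rewrite setTI.
have -> : (fun x => u x \is a Num.int) @^-1` [set true] =
          u @^-1` [set x : R | x \is a Num.int] by [].
by rewrite -[X in measurable X]setTI; apply: mf => //; exact: measurable_int.
Qed.

Lemma integral_deltaZ_lty_ae_int (u : T -> R) : measurable_fun setT u ->
  (\int[mu]_x deltaZ (u x) < +oo)%E -> \forall x \ae mu, u x \is a Num.int.
Proof.
move=> mf hI.
have hint : mu.-integrable setT (fun x => deltaZ (u x)).
  apply/integrableP; split; first exact: measurable_deltaZ.
  by under eq_integral do rewrite gee0_abs ?deltaZ_ge0 //.
apply: filterS (integrable_ae measurableT hint) => x /(_ I).
by rewrite /deltaZ; case: ifP.
Qed.

Lemma integral_deltaZ_ae_int (u : T -> R) : measurable_fun setT u ->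
  (\forall x \ae mu, u x \is a Num.int) -> (\int[mu]_x deltaZ (u x) = 0)%E.
Proof.
move=> mf hae; rewrite (ae_eq_integral (cst 0%E)) ?integral0 //.
- exact: measurable_deltaZ.
- by apply: filterS hae => x hx _; rewrite deltaZ_int.
Qed.

Lemma int_norm_le_sqr (z : R) : z \is a Num.int -> `|z| <= z ^+ 2.
Proof.
move=> hz; have [->|z0] := eqVneq z 0; first by rewrite normr0 expr0n.
rewrite -real_normK ?num_real // expr2 ler_peMr //.
exact: le_trans (norm_intr_ge1 hz z0).
Qed.

Lemma Lnorm1_le_L2norm_sqr (a : T -> R) : inL2 mu a ->
  (\forall x \ae mu, a x \is a Num.int) ->
  ('N[mu]_1[EFin \o a] <= (L2norm mu a ^+ 2)%:E)%E.
Proof.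
move=> ha hae; rewrite L2norm_sqrE // Lnorm1.
have ma := inL2_measurable ha.
apply: ae_ge0_le_integral => //.
- by apply: measurableT_comp => //; exact: measurableT_comp.
- by move=> x _; rewrite lee_fin sqr_ge0.
- by apply/measurable_EFinP; exact: measurable_funX.
- by apply: filterS hae => x hx _ /=; rewrite lee_fin int_norm_le_sqr.
Qed.

End integer_valued.

Section L1_norm.
Context {d} {T : measurableType d} {R : realType} {mu : {measure set T -> \bar R}}.

Definition sgnf (g : T -> R) x : R := if 0 <= g x then 1 else -1.

Lemma sgnf_mul g x : g x * sgnf g x = `|g x|.
Proof.
rewrite /sgnf; case: ifP => h; first by rewrite mulr1 ger0_norm.
by rewrite mulrN1 ltr0_norm // ltNge h.
Qed.

Lemma sgnf_norm g x : `|sgnf g x| = 1.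
Proof. by rewrite /sgnf; case: ifP; rewrite ?normrN normr1. Qed.

Lemma measurable_sgnf g : measurable_fun setT g -> measurable_fun setT (sgnf g).
Proof.
move=> mg; apply: measurable_fun_ifT => //.
apply: (measurable_fun_bool true); rewrite setTI.
have -> : (fun x => 0 <= g x) @^-1` [set true] = g @^-1` `[0, +oo[%classic.
  by apply/seteqP; split => x /=; rewrite in_itv /= andbT.
by rewrite -[X in measurable X]setTI; apply: mg => //; exact: measurable_itv.
Qed.

Lemma inL2_sgnf g : (mu [set: T] < +oo)%E -> measurable_fun setT g ->
  inL2 mu (sgnf g).
Proof.
move=> hmu mg; rewrite /inL2 inE; apply/andP; split.
  by rewrite inE; exact: measurable_sgnf.
rewrite inE /= /finite_norm.
have := powR_Lnorm mu (EFin \o sgnf g) (lt0r_neq0 (ltr0n R 2)).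
under eq_integral do rewrite /= sgnf_norm powR1.
rewrite integral_cst // mul1e => hN.
rewrite ltey; apply/negP => /eqP hoo.
by move: hN; rewrite hoo poweRyr // => hN; move: hmu; rewrite -hN ltxx.
Qed.

Lemma Lnorm1_L2inner_sgnf g : (mu [set: T] < +oo)%E -> inL2 mu g ->
  'N[mu]_1[EFin \o g]%E = (L2inner mu g (sgnf g))%:E.
Proof.
move=> hmu hg; have hs := inL2_sgnf hmu (inL2_measurable hg).
rewrite Lnorm1 /L2inner; under eq_Rintegral do rewrite sgnf_mul.
rewrite RintegralE //.
have -> : (fun x => `|g x|) = (fun x => g x * sgnf g x).
  by apply/funext => x; rewrite sgnf_mul.
exact: L2inner_integrable.
Qed.

Lemma L2inner_le_Lnorm1 a b : inL2 mu a -> inL2 mu b -> (forall x, `|b x| <= 1) ->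
  ((L2inner mu a b)%:E <= 'N[mu]_1[EFin \o a])%E.
Proof.
move=> ha hb b1; apply: (@le_trans _ _ (`|L2inner mu a b|)%:E).
  by rewrite lee_fin real_ler_norm ?num_real.
apply: le_trans (normr_L2inner_le_integral ha hb) _.
rewrite Lnorm1; apply: ge0_le_integral => //.
- apply/measurable_EFinP; apply: measurableT_comp => //.
  exact: measurable_funM (inL2_measurable ha) (inL2_measurable hb).
- by apply: measurableT_comp => //; apply/measurable_EFinP; exact: inL2_measurable ha.
- by move=> x _ /=; rewrite lee_fin normrM ler_piMr.
Qed.

Lemma Lnorm1_le_of_weak_cvg (g : nat -> T -> R) (w v : T -> R) (b : R) :
  (mu [set: T] < +oo)%E -> inL2 mu w -> inL2 mu v -> (forall j, inL2 mu (g j)) ->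
  weak_cvg_L2 mu g v ->
  (\forall j \near \oo, 'N[mu]_1[EFin \o (w \- g j)%R] <= b%:E)%E ->
  ('N[mu]_1[EFin \o (w \- v)%R] <= b%:E)%E.
Proof.
move=> hmu hw hv hg gv hb.
have hwv := inL2B hw hv; set s := sgnf (w \- v).
have hs : inL2 mu s := inL2_sgnf hmu (inL2_measurable hwv).
rewrite Lnorm1_L2inner_sgnf // lee_fin L2innerBl //.
apply: (ler_cvg_to (cvgB (cvg_cst (L2inner mu w s)) (gv _ hs)) (cvg_cst b)).
apply: filterS hb => j hj.
change (L2inner mu w s - L2inner mu (g j) s <= b).
rewrite -L2innerBl // -lee_fin; apply: le_trans hj.
by apply: L2inner_le_Lnorm1 (inL2B hw (hg j)) hs _ => x; rewrite sgnf_norm.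
Qed.

Lemma Lnorm1_sub_le_sum (v : nat -> T -> R) (a : nat -> R) :
  (forall i, measurable_fun setT (v i)) ->
  (forall i, 'N[mu]_1[EFin \o (v i.+1 \- v i)%R] <= (a i)%:E)%E ->
  forall m n, (m <= n)%N ->
  ('N[mu]_1[EFin \o (v n \- v m)%R] <= (\sum_(m <= i < n) a i)%:E)%E.
Proof.
move=> mv hv m n /subnK <-; elim: (n - m)%N => [|k IH].
  rewrite add0n big_geq // (_ : EFin \o _ = cst 0%E) ?Lnorm0 //.
  by apply/funext => x /=; rewrite subrr.
rewrite addSn big_nat_recr ?leq_addl //= EFinD addeC.
have -> : v (k + m).+1 \- v m = (v (k + m).+1 \- v (k + m)) \+ (v (k + m) \- v m).
  by apply/funext => x /=; rewrite addrA subrK.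
apply: le_trans (eminkowski _ (measurable_funB _ _) (measurable_funB _ _) _) _ => //.
exact: leeD.
Qed.

End L1_norm.

Section summable_decrease.
Context {R : realType}.

Lemma cvgn_series_of_decrease (F a : nat -> R) (c m : R) : 0 < c ->
  (forall n, 0 <= a n) -> (forall n, m <= F n) ->
  (forall n, F n.+1 <= F n - c * a n) -> cvgn (series a).
Proof.
move=> c0 a0 Fm Fdec.
have Fseries n : c * series a n <= F 0 - F n.
  elim: n => [|n IH]; first by rewrite seriesEord /= big_ord0 mulr0 subrr.
  by rewrite seriesSr mulrDr; have := Fdec n; lra.
apply: nondecreasing_is_cvgn; first exact: nondecreasing_series.
exists ((F 0 - m) / c) => _ [n _ <-]; rewrite ler_pdivlMr // mulrC.
by apply: le_trans (Fseries n) _; have := Fm n; lra.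
Qed.

Lemma sum_le_lim_sub_series (a : nat -> R) : (forall n, 0 <= a n) ->
  cvgn (series a) -> forall m n, (m <= n)%N ->
  \sum_(m <= i < n) a i <= limn (series a) - series a m.
Proof.
move=> a0 ca m n mn; rewrite -sub_series_geq // lerD2r.
by apply: nondecreasing_cvgn_le => //; exact: nondecreasing_series.
Qed.

End summable_decrease.

Section proximal_gradient_iterates.
Context {d} {T : measurableType d} {R : realType} {mu : {measure set T -> \bar R}}.
Variables (f : (T -> R) -> R) (gradf : (T -> R) -> T -> R) (Lf L : R).
Variable u : nat -> T -> R.
Hypothesis hu0 : inL2 mu (u 0%N).
Hypothesis hstep : forall k : nat, inL2 mu (u k.+1) /\
  forall v, inL2 mu v ->
    (prox_model mu f gradf L (u k) (u k.+1) <= prox_model mu f gradf L (u k) v)%E.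

Lemma prox_iterate_inL2 k : inL2 mu (u k).
Proof. by case: k => [//|k]; exact: (hstep k).1. Qed.

Lemma prox_iterate_ae_int k : \forall x \ae mu, u k.+1 x \is a Num.int.
Proof.
apply: integral_deltaZ_lty_ae_int; first exact: inL2_measurable (prox_iterate_inL2 _).
(* The competitor v = 0 has a finite model value. *)
have := (hstep k).2 _ inL2_cst0.
have dZ0 : deltaZ (0 : R) = 0%E by rewrite deltaZ_int ?rpred0.
rewrite /prox_model.
under [X in (_ <= _ + X)%E]eq_integral do rewrite /= dZ0.
rewrite integral0 adde0 ltey; apply: contraTN => /eqP ->; rewrite addey //.
Qed.

Lemma prox_integral_deltaZ k : (\int[mu]_x deltaZ (u k.+1 x) = 0)%E.
Proof.
apply: integral_deltaZ_ae_int (prox_iterate_ae_int k).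
exact: inL2_measurable (prox_iterate_inL2 _).
Qed.

Hypothesis hF : frechet_gradient_L2 mu f gradf.
Hypothesis hL : lipschitz_L2 mu gradf Lf.

Lemma prox_sufficient_decrease k :
  f (u k.+2) <= f (u k.+1) - (L - Lf) / 2 * L2norm mu (u k.+2 \- u k.+1) ^+ 2.
Proof.
have [hu1 hu2] := (prox_iterate_inL2 k.+1, prox_iterate_inL2 k.+2).
have := (hstep k.+1).2 _ hu1.
rewrite /prox_model !prox_integral_deltaZ !adde0 lee_fin.
have -> : u k.+1 \- u k.+1 = cst 0 by apply/funext => x /=; rewrite subrr.
rewrite L2inner0r L2norm_cst0 expr0n /= mulr0 !addr0 => hmin.
have := descent_lemma hF hL hu1 (inL2B hu2 hu1).
have -> : u k.+1 \+ (u k.+2 \- u k.+1) = u k.+2.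
  by apply/funext => x /=; rewrite addrC subrK.
lra.
Qed.

Lemma prox_step_Lnorm1_le k :
  ('N[mu]_1[EFin \o (u k.+2 \- u k.+1)%R] <= (L2norm mu (u k.+2 \- u k.+1) ^+ 2)%:E)%E.
Proof.
apply: Lnorm1_le_L2norm_sqr; first exact: inL2B (prox_iterate_inL2 _) (prox_iterate_inL2 _).
apply: filterS2 (prox_iterate_ae_int k.+1) (prox_iterate_ae_int k) => x h2 h1 /=.
exact: rpredB.
Qed.

Variable m : R.
Hypothesis f_ge : forall v, inL2 mu v -> m <= f v.
Hypothesis ltLfL : Lf < L.

Let prox_step k := L2norm mu (u k.+2 \- u k.+1) ^+ 2.

Lemma prox_cvg_series_steps : cvgn (series prox_step).
Proof.
apply: (@cvgn_series_of_decrease _ (fun k => f (u k.+1)) _ ((L - Lf) / 2) m).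
- by rewrite divr_gt0 // subr_gt0.
- by move=> k; exact: sqr_ge0.
- by move=> k; exact/f_ge/prox_iterate_inL2.
- exact: prox_sufficient_decrease.
Qed.

Lemma prox_Lnorm1_tail k n : (k <= n)%N ->
  ('N[mu]_1[EFin \o (u n.+1 \- u k.+1)%R]
     <= (limn (series prox_step) - series prox_step k)%:E)%E.
Proof.
move=> kn; apply: le_trans (Lnorm1_sub_le_sum (v := fun i => u i.+1) (a := prox_step) _ _ kn) _.
- by move=> i; exact/inL2_measurable/prox_iterate_inL2.
- exact: prox_step_Lnorm1_le.
- rewrite lee_fin sum_le_lim_sub_series //; last exact: prox_cvg_series_steps.
  by move=> i; exact: sqr_ge0.
Qed.

End proximal_gradient_iterates.

Theorem theorem5p4 (d : measure_display) (T : measurableType d) (R : realType)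
  (mu : {measure set T -> \bar R})
  (f : (T -> R) -> R) (gradf : (T -> R) -> T -> R) (Lf L : R)
  (u : nat -> T -> R) (ustar : T -> R) :
  (mu [set: T] < +oo)%E ->
  assumptionA mu f gradf Lf ->
  Lf < L ->
  inL2 mu (u 0%N) ->
  (forall k : nat, inL2 mu (u k.+1) /\
     forall v, inL2 mu v ->
       (prox_model mu f gradf L (u k) (u k.+1) <= prox_model mu f gradf L (u k) v)%E) ->
  inL2 mu ustar ->
  (exists phi : nat -> nat, (forall j, (phi j < phi j.+1)%N) /\
     weak_cvg_L2 mu (fun j => u (phi j)) ustar) ->
  ('N[mu]_1 [EFin \o (fun x => (u k x - ustar x)%R)])%E @[k --> \oo] --> 0%E.
Proof.
move=> hmu [[m fm] _ hF hL] hLL hu0 hstep hus [phi [phi_incr hweak]].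
have hu := prox_iterate_inL2 hu0 hstep.
have cvg_s := prox_cvg_series_steps hu0 hstep hF hL fm hLL.
have tail := prox_Lnorm1_tail hu0 hstep hF hL fm hLL.
set s := series _ in cvg_s tail; set l := limn s in tail.
have phi_ge j : (j <= phi j)%N.
  by elim: j => [//|j IH]; exact: leq_ltn_trans IH (phi_incr j).
have bound k : ('N[mu]_1[EFin \o (u k.+1 \- ustar)%R] <= (l - s k)%:E)%E.
  apply: (Lnorm1_le_of_weak_cvg hmu (hu _) hus (fun j => hu _) hweak).
  apply: filterS (nbhs_infty_gt k) => j kj.
  move: (leq_trans kj (phi_ge j)); case: (phi j) => [//|n] kn.
  have -> : EFin \o (u k.+1 \- u n.+1)%R = (\- (EFin \o (u n.+1 \- u k.+1)%R))%E.
    by apply/funext => x /=; rewrite opprB.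
  by rewrite oppe_Lnorm; exact: tail.
suff cvg0 : (fun k => 'N[mu]_1[EFin \o (u k.+1 \- ustar)%R]%E) @ \oo --> 0%E.
  by rewrite -cvg_shiftS; exact: cvg0.
apply: (squeeze_cvge (f := cst 0%E) (h := fun k => (l - s k)%:E)).
- by apply: nearW => k /=; rewrite Lnorm_ge0 bound.
- exact: cvg_cst.
- apply: cvg_EFin; first exact: nearW.
  by rewrite -(subrr l); apply: cvgB => //; exact: cvg_cst.
Qed.
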